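(* Let $\rho>0$. There is a constant $C>0$ such that for every $\varepsilon>0$ and every $\xi\in\mathbb{H}^N$ with $|\xi|>\rho$, $$|\nabla_{\mathbb{H}}u_\varepsilon(\xi)|\le C\varepsilon^{\frac{Q-2s}{2}}.$$
   Context: $\mathbb{H}^N=\mathbb{R}^{2N+1}$ with group law $\xi\circ\xi'=(x+x',y+y',t+t'+2(x'\cdot y-y'\cdot x))$, $Q=2N+2$, dilations $\delta_a(x,y,t)=(ax,ay,a^2t)$, homogeneous norm $|\xi|=((|x|^2+|y|^2)^2+t^2)^{1/4}$, balls $B_r(0)=\{|\xi|<r\}$, $s\in(0,1)$, $Q^*_s=\frac{2Q}{Q-2s}$. The horizontal gradient is $\nabla_{\mathbb{H}}u=(X_1u,\dots,X_Nu,Y_1u,\dots,Y_Nu)$ with $X_j=\partial_{x_j}+2y_j\partial_t$, $Y_j=\partial_{y_j}-2x_j\partial_t$. $S_s>0$ is the sharp fractional Sobolev constant on $\mathbb{H}^N$. $U(x,y,t)=C_0(t^2+(1+|x|^2+|y|^2)^2)^{-\frac{Q-2s}{4}}$ ($C_0>0$), $\overline{u}=U/\|U\|_{L^{Q^*_s}(\mathbb{H}^N)}$, $u^*(\xi)=\overline{u}(\delta_{S_s^{-1/(2s)}}(\xi))$, $U_\varepsilon(\xi)=\varepsilon^{-\frac{Q-2s}{2}}u^*(\delta_{1/\varepsilon}(\xi))$. $\Omega\subseteq\mathbb{H}^N$ is bounded open, $r>0$ with $B_{4r}(0)\subset\Omega$, $\phi\in C^\infty(\mathbb{H}^N)$,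 $0\le\phi\le1$, $\phi=1$ on $B_r(0)$, $\phi=0$ outside $B_{2r}(0)$, and $u_\varepsilon=U_\varepsilon\phi$. *)

From HB Require Import structures.
From mathcomp Require Import all_boot all_order all_algebra.
From mathcomp Require Import all_classical all_reals all_analysis.
Set Implicit Arguments. Unset Strict Implicit. Unset Printing Implicit Defensive.
Import Order.TTheory GRing.Theory Num.Theory.
Import numFieldNormedType.Exports.
Local Open Scope classical_set_scope.
Local Open Scope ring_scope.

Section Heisenberg.
Variables (R : realType) (N : nat).

Definition Heis : Type := ('rV[R]_N * 'rV[R]_N * R^o)%type.

Definition hx (p : Heis) : 'rV[R]_N := p.1.1.
Definition hy (p : Heis) : 'rV[R]_N := p.1.2.
Definition ht (p : Heis) : R := p.2.

Definition sqn (x : 'rV[R]_N) : R := \sum_(i < N) (x 0 i) ^+ 2.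

Definition Qdim : R := (2 * N + 2)%:R.

Definition hnorm (p : Heis) : R :=
  ((sqn (hx p) + sqn (hy p)) ^+ 2 + (ht p) ^+ 2) `^ (4%:R^-1).

Definition dil (a : R) (p : Heis) : Heis :=
  ((a *: hx p, a *: hy p), a ^+ 2 * ht p).

Definition erow (j : 'I_N) : 'rV[R]_N := \row_(i < N) (i == j)%:R.
Definition dirx (j : 'I_N) : Heis := ((erow j, 0), 0).
Definition diry (j : 'I_N) : Heis := ((0, erow j), 0).
Definition dirt : Heis := ((0, 0), 1).

Definition Xf (j : 'I_N) (u : Heis -> R^o) (p : Heis) : R :=
  'D_(dirx j) u p + 2 * (hy p 0 j) * 'D_dirt u p.
Definition Yf (j : 'I_N) (u : Heis -> R^o) (p : Heis) : R :=
  'D_(diry j) u p - 2 * (hx p 0 j) * 'D_dirt u p.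

Definition hgrad_norm (u : Heis -> R^o) (p : Heis) : R :=
  Num.sqrt (\sum_(j < N) ((Xf j u p) ^+ 2 + (Yf j u p) ^+ 2)).

Fixpoint Ck (k : nat) (f : Heis -> R^o) : Prop :=
  match k with
  | 0 => continuous f
  | k.+1 => (forall p, differentiable f p) /\ (forall v : Heis, Ck k (fun p => 'D_v f p))
  end.
Definition smooth (f : Heis -> R^o) : Prop := forall k, Ck k f.

Definition hball (r : R) : set Heis := [set p | hnorm p < r].

Definition Ububble (s C0 : R) (p : Heis) : R :=
  C0 * ((ht p) ^+ 2 + (1 + sqn (hx p) + sqn (hy p)) ^+ 2) `^ (- ((Qdim - 2 * s) / 4%:R)).

(* ubar = U / ||U||_{L^{Q*_s}}; the norm is passed as the parameter normU *)
Definition ubar (s C0 normU : R) (p : Heis) : R := Ububble s C0 p / normU.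

Definition ustar (s C0 normU S : R) (p : Heis) : R :=
  ubar s C0 normU (dil (S `^ (- (2 * s)^-1)) p).

Definition Ueps (s C0 normU S eps : R) (p : Heis) : R :=
  eps `^ (- ((Qdim - 2 * s) / 2)) * ustar s C0 normU S (dil eps^-1 p).

Definition ueps (s C0 normU S eps : R) (phi : Heis -> R) : Heis -> R^o :=
  fun p => Ueps s C0 normU S eps p * phi p.

End Heisenberg.

(* Since u_eps = U_eps phi, X_j u_eps = U_eps X_j phi + phi X_j U_eps.  Undoing the
   dilations, U_eps = c eps^((Q-2s)/2) B^-k with k = (Q-2s)/4 and
   B = (a^2 t)^2 + (eps^2 + a^2 |z|^2)^2, so X_j U_eps = -k U_eps (X_j B) / B.
   For |xi| > rho we have B >= a^4 rho^4, which bounds B^-k independently of eps;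
   on the support of phi the coordinates are bounded, and then (X_j B) / B is
   bounded because (eps^2 + a^2 |z|^2)^2 <= B.  Finally the horizontal gradient of
   phi is continuous with compact support, hence bounded. *)

From HB Require Import structures.
From mathcomp Require Import all_boot all_order all_algebra.
From mathcomp Require Import all_classical all_reals all_analysis.
From mathcomp Require Import ring lra.
Set Implicit Arguments. Unset Strict Implicit. Unset Printing Implicit Defensive.
Import Order.TTheory GRing.Theory Num.Theory.
Import numFieldNormedType.Exports.
Local Open Scope classical_set_scope.
Local Open Scope ring_scope.

Section continuity_boundedness.
Variables (R : realType) (T : topologicalType).

Lemma continuous_sum (I : Type) (r : seq I) (P : pred I) (f : I -> T -> R^o) :
  (forall i, continuous (f i)) ->
  continuous (fun x => \sum_(i <- r | P i) f i x).
Proof.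
move=> fc; rewrite -fct_sumE.
apply: (big_ind (fun g : T -> R^o => continuous g)) => [|g h gc hc x|i _].
- exact: (@cst_continuous T R^o 0).
- exact: continuousD (gc x) (hc x).
- exact: fc.
Qed.

Lemma compact_support_bounded (K : set T) (g : T -> R^o) :
  compact K -> continuous g -> (forall x, ~ K x -> g x = 0) ->
  exists M, forall x, `|g x| <= M.
Proof.
move=> cK gc g0.
have cgK : compact (g @` K).
  apply: continuous_compact cK; exact: continuous_subspaceT.
have [M0 [_ gKM]] := compact_bounded cgK.
have M0M : M0 < Num.max M0 0 + 1 by rewrite ltr_pwDr // le_max lexx.
exists (Num.max M0 0 + 1) => x; have [Kx|nKx] := pselect (K x).
  by apply: (gKM _ M0M); exists x.
by rewrite g0 // normr0 addr_ge0 // le_max lexx orbT.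
Qed.

End continuity_boundedness.

Section derivative_along_line.
Variables (R : realType) (V : normedModType R).

Let difference_quotient_along_line (f : V -> R^o) (p v : V) :
  (fun h : R => h^-1 *: ((f \o shift p) (h *: v) - f p)) =
  (fun h : R^o => h^-1 *: (((fun h : R^o => f (h *: v + p)) \o shift 0) (h *: 1)
     - (fun h : R^o => f (h *: v + p)) 0)).
Proof.
apply/funext => h /=.
by rewrite /shift /= addr0 scale0r add0r -[h%:A]/(h * 1) mulr1.
Qed.

Lemma derive_along_line (f : V -> R^o) (p v : V) :
  'D_v f p = 'D_1 (fun h : R^o => f (h *: v + p)) 0.
Proof. by rewrite /derive difference_quotient_along_line. Qed.

Lemma derivable_along_line (f : V -> R^o) (p v : V) :
  derivable f p v = derivable (fun h : R^o => f (h *: v + p)) 0 1.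
Proof. by rewrite /derivable difference_quotient_along_line. Qed.

Lemma derive1_powR_horner (c k : R) (P : {poly R}) : 0 < P.[0] ->
  derivable (fun h : R^o => (c * P.[h] `^ k : R^o)) 0 1 /\
  'D_1 (fun h : R^o => (c * P.[h] `^ k : R^o)) 0 =
     c * (k * P.[0] `^ (k - 1) * P^`().[0]).
Proof.
move=> P0.
have dP : derivable (horner P : R^o -> R^o) 0 1 by exact: derivable_horner.
have dpow : derivable (@powR R ^~ k : R^o -> R^o) P.[0] 1.
  by apply: (@derivable_powR R 1 k); rewrite in_itv /= andbT.
have dcomp : derivable ((@powR R ^~ k) \o horner P : R^o -> R^o) 0 1.
  apply/derivable1_diffP; apply: differentiable_comp; exact/derivable1_diffP.
have -> : (fun h : R^o => (c * P.[h] `^ k : R^o)) =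
    c \*o ((@powR R ^~ k) \o horner P) by [].
split; first exact: derivableM (derivable_cst (c : R^o) (0 : R^o) 1) dcomp.
rewrite (deriveMl _ dcomp) -derive1E (derive1_comp dP dpow).
by rewrite powR_derive1 ?in_itv /= ?andbT // -derivE mulrA.
Qed.

Lemma derive_powR_horner_along_line (f : V -> R^o) (p v : V) (c k : R)
    (P : {poly R}) :
  (forall h, f (h *: v + p) = c * P.[h] `^ k) -> 0 < P.[0] ->
  derivable f p v /\ 'D_v f p = c * (k * P.[0] `^ (k - 1) * P^`().[0]).
Proof.
move=> fP P0; rewrite derive_along_line derivable_along_line.
have -> : (fun h : R^o => f (h *: v + p)) =
    (fun h : R^o => (c * P.[h] `^ k : R^o)) by apply/funext => h; exact: fP.
exact: derive1_powR_horner.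
Qed.

End derivative_along_line.

Lemma horizontal_ratio_le (R : realType) (a m B L M x y t : R) :
  0 <= m -> m ^+ 2 <= B -> 0 < L -> L <= B ->
  `|x| <= M -> `|y| <= M -> `|t| <= M ->
  `|4 * a ^+ 2 * m * x + 4 * a ^+ 4 * y * t| / B <=
  4 * a ^+ 2 * M * (1 + L^-1) + 4 * a ^+ 4 * M ^+ 2 / L.
Proof.
move=> m0 mB L0 LB xM yM tM.
rewrite (_ : a ^+ 4 = (a ^+ 2) ^+ 2); last by rewrite -exprM.
move: (a ^+ 2) (sqr_ge0 a) => c c0.
have B0 : 0 < B by exact: lt_le_trans LB.
have iB : B^-1 <= L^-1 by rewrite lef_pV2 ?posrE.
have iB0 : 0 <= B^-1 by rewrite invr_ge0 ltW.
have M0 : 0 <= M by exact: le_trans xM.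
(* if m <= 1 then m / B <= 1 / L, otherwise m <= m ^ 2 <= B *)
have mB1 : m / B <= 1 + L^-1.
  have LiB : 1 <= L^-1 * B.
    by rewrite -(mulVf (lt0r_neq0 L0)) ler_wpM2l // invr_ge0 ltW.
  by rewrite ler_pdivrMr // mulrDl mul1r; case: (lerP m 1) => m1; nra.
have tri : `|4 * c * m * x + 4 * c ^+ 2 * y * t| <=
    4 * c * m * `|x| + 4 * c ^+ 2 * (`|y| * `|t|).
  apply: le_trans (ler_normD _ _) _.
  move: (c ^+ 2) (sqr_ge0 c) => c2 c20.
  rewrite !normrM (ger0_norm c0) (ger0_norm m0) (ger0_norm c20).
  by rewrite ger0_norm // mulrA.
apply: le_trans (ler_wpM2r iB0 tri) _.
rewrite mulrDl -mulrA [m * _]mulrC mulrA -[_ * _ * m * B^-1]mulrA.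
apply: lerD.
  by apply: ler_pM => //; rewrite ?mulr_ge0 ?divr_ge0 ?ler_wpM2l ?mulr_ge0 // ltW.
apply: ler_pM => //; first by rewrite !mulr_ge0 ?sqr_ge0.
by rewrite ler_wpM2l ?mulr_ge0 ?sqr_ge0 // expr2; exact: ler_pM.
Qed.

Section heisenberg_geometry.
Variables (R : realType) (N : nat).
Local Notation H := (Heis R N).
Implicit Types (p v : H) (x e : 'rV[R]_N).

Lemma scale_add_coord p v (h : R) : h *: v + p =
  ((h *: hx v + hx p, h *: hy v + hy p), h * ht v + ht p).
Proof. by case: p => [[x y] t]; case: v => [[a b] c]. Qed.

Definition dotv x e : R := \sum_(i < N) x 0 i * e 0 i.

Lemma sqn_scale_add x e (h : R) :
  sqn (h *: e + x) = sqn x + 2 * h * dotv x e + h ^+ 2 * sqn e.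
Proof.
rewrite /sqn /dotv !mulr_sumr -!big_split /=; apply: eq_bigr => i _.
rewrite !mxE; ring.
Qed.

Lemma sqnZ (c : R) x : sqn (c *: x) = c ^+ 2 * sqn x.
Proof. by rewrite /sqn mulr_sumr; apply: eq_bigr => i _; rewrite mxE exprMn. Qed.

Lemma sqn_ge0 x : 0 <= sqn x.
Proof. by apply: sumr_ge0 => i _; exact: sqr_ge0. Qed.

Lemma sqr_coord_le_sqn x i : x 0 i ^+ 2 <= sqn x.
Proof. by rewrite /sqn (bigD1 i) //= lerDl; apply: sumr_ge0 => j _; exact: sqr_ge0. Qed.

Lemma dotv_erow x j : dotv x (erow R j) = x 0 j.
Proof.
rewrite /dotv (bigD1 j) //= big1 ?addr0 /erow ?mxE ?eqxx ?mulr1 //.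
by move=> i /negbTE ij; rewrite mxE ij mulr0.
Qed.

Lemma dotv0 x : dotv x 0 = 0.
Proof. by rewrite /dotv big1 // => i _; rewrite mxE mulr0. Qed.

Definition hnorm4 p : R := (sqn (hx p) + sqn (hy p)) ^+ 2 + ht p ^+ 2.

Lemma hnorm4_ge0 p : 0 <= hnorm4 p.
Proof. by rewrite addr_ge0 ?sqr_ge0. Qed.

Lemma le_hnorm p (c : R) : 0 <= c -> (c <= hnorm p) = (c ^+ 4 <= hnorm4 p).
Proof.
move=> c0; have i4 : 0 < 4^-1 :> R by rewrite invr_gt0.
have c4 : (c ^+ 4) `^ 4^-1 = c.
  by rewrite -powR_mulrn // -powRrM mulfV ?powRr1.
rewrite -{1}c4 /hnorm -/(hnorm4 p).
by rewrite (le_mono_in (gt0_ltr_powR i4)) ?nnegrE ?exprn_ge0 ?hnorm4_ge0 //.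
Qed.

Definition hbox (M : R) : set H :=
  ([set x : 'rV_N | forall i, `|x 0 i| <= M] `*`
   [set y : 'rV_N | forall i, `|y 0 i| <= M]) `*` [set t : R | `|t| <= M].

Lemma hbox_compact (M : R) : compact (hbox M).
Proof.
have seg : compact [set t : R | `|t| <= M].
  have -> : [set t : R | `|t| <= M] = `[- M, M]%classic.
    by apply/seteqP; split => t /=; rewrite in_itv /= ler_norml.
  exact: segment_compact.
have cube : compact [set x : 'rV[R]_N | forall i, `|x 0 i| <= M].
  have := @rV_compact _ N (fun=> [set t : R | `|t| <= M]) (fun=> seg).
  by congr compact; apply/seteqP; split => x /= xM i; rewrite ?(ord1 0) // -(ord1 0).
by apply: compact_setX => //; exact: compact_setX.
Qed.

Lemma hbox_hnorm4_le p (c : R) : 0 <= c -> hnorm4 p <= c ^+ 4 ->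
  hbox (c + c ^+ 2) p.
Proof.
move=> c0 pc.
have c2 : 0 <= c ^+ 2 by exact: sqr_ge0.
have sq_le z (b : R) : 0 <= b -> z ^+ 2 <= b ^+ 2 -> `|z| <= b.
  by move=> b0; rewrite -real_normK ?num_real // ler_sqr ?nnegrE.
have W : sqn (hx p) + sqn (hy p) <= c ^+ 2.
  rewrite -ler_sqr ?nnegrE ?addr_ge0 ?sqn_ge0 // -exprM.
  by apply: le_trans pc; rewrite lerDl sqr_ge0.
have gx := sqn_ge0 (hx p); have gy := sqn_ge0 (hy p).
have cM : c <= c + c ^+ 2 by rewrite lerDl.
have c2M : c ^+ 2 <= c + c ^+ 2 by rewrite lerDr.
split; [split => i /=|].
- apply: le_trans cM; apply: sq_le => //.
  by apply: le_trans (sqr_coord_le_sqn _ i) _; lra.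
- apply: le_trans cM; apply: sq_le => //.
  by apply: le_trans (sqr_coord_le_sqn _ i) _; lra.
- apply: le_trans c2M => /=; apply: sq_le => //.
  by rewrite -exprM; apply: le_trans pc; rewrite lerDr sqr_ge0.
Qed.

Lemma hx_continuous i : continuous (fun q : H => hx q 0 i).
Proof.
move=> q; apply: (@continuous_comp _ _ _ (fun q : H => hx q) (fun x => x 0 i)).
  by apply: (@continuous_comp _ _ _ fst fst); exact: cvg_fst.
exact: coord_continuous.
Qed.

Lemma hy_continuous i : continuous (fun q : H => hy q 0 i).
Proof.
move=> q; apply: (@continuous_comp _ _ _ (fun q : H => hy q) (fun x => x 0 i)).
  by apply: (@continuous_comp _ _ _ fst snd); [exact: cvg_fst|exact: cvg_snd].
exact: coord_continuous.
Qed.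

Lemma ht_continuous : continuous (fun q : H => ht q).
Proof. by move=> q; exact: cvg_snd. Qed.

Lemma hnorm4_continuous : continuous (hnorm4 : H -> R^o).
Proof.
have sq_cont (f : H -> R^o) : continuous f -> continuous (fun q => f q ^+ 2 : R^o).
  by move=> fc q; exact: continuousM (fc q) (fc q).
have add_cont (f g : H -> R^o) : continuous f -> continuous g ->
    continuous (fun q => f q + g q : R^o).
  by move=> fc gc q; exact: continuousD (fc q) (gc q).
have sqn_cont (c : 'I_N -> H -> R^o) : (forall i, continuous (c i)) ->
    continuous (fun q => \sum_(i < N) c i q ^+ 2 : R^o).
  by move=> cc; apply: continuous_sum => i; exact: sq_cont.
apply: (add_cont); apply: (sq_cont); last exact: ht_continuous.
by apply: add_cont; apply: sqn_cont; [exact: hx_continuous|exact: hy_continuous].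
Qed.

End heisenberg_geometry.

Section horizontal_gradient.
Variables (R : realType) (N : nat).
Local Notation H := (Heis R N).
Implicit Types (u f g : H -> R^o) (p : H).

Lemma XfM f g j p : (forall v, derivable f p v) -> (forall v, derivable g p v) ->
  Xf j (f * g) p = f p * Xf j g p + g p * Xf j f p.
Proof. by move=> df dg; rewrite /Xf !(deriveM (df _) (dg _)) -![_ *: _]/(_ * _); ring. Qed.

Lemma YfM f g j p : (forall v, derivable f p v) -> (forall v, derivable g p v) ->
  Yf j (f * g) p = f p * Yf j g p + g p * Yf j f p.
Proof. by move=> df dg; rewrite /Yf !(deriveM (df _) (dg _)) -![_ *: _]/(_ * _); ring. Qed.

Lemma Xf_Yf_le_hgrad_norm u j p :
  `|Xf j u p| <= hgrad_norm u p /\ `|Yf j u p| <= hgrad_norm u p.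
Proof.
have sum_ge0 : 0 <= \sum_(i < N | i != j) (Xf i u p ^+ 2 + Yf i u p ^+ 2).
  by apply: sumr_ge0 => i _; rewrite addr_ge0 ?sqr_ge0.
rewrite /hgrad_norm (bigD1 j) //= -!sqrtr_sqr !ler_sqrt ?addr_ge0 ?sqr_ge0 //.
have := sqr_ge0 (Xf j u p); have := sqr_ge0 (Yf j u p); split; lra.
Qed.

Lemma hgrad_norm_le u p (b : R) : 0 <= b ->
  (forall j, `|Xf j u p| <= b /\ `|Yf j u p| <= b) ->
  hgrad_norm u p <= Num.sqrt (N.*2)%:R * b.
Proof.
move=> b0 ub; rewrite -[b in _ * b]ger0_norm // -sqrtr_sqr -sqrtrM ?ler0n //.
rewrite ler_sqrt ?mulr_ge0 ?sqr_ge0 //.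
have sq_le z : `|z| <= b -> z ^+ 2 <= b ^+ 2.
  by move=> zb; rewrite -real_normK ?num_real // ler_sqr ?nnegrE.
apply: le_trans (_ : \sum_(j < N) (b ^+ 2 + b ^+ 2) <= _).
  by apply: ler_sum => j _; have [xb yb] := ub j; apply: lerD; exact: sq_le.
by rewrite sumr_const card_ord -mulr2n -mulrnA mul2n mulr_natl.
Qed.

Lemma hgrad_norm_continuous u : Ck 1 u -> continuous (hgrad_norm u).
Proof.
move=> [_ Du] p; apply: continuous_comp (@sqrt_continuous R _).
have two_coord_cont (c : H -> R^o) : continuous c -> continuous (fun q => 2 * c q : R^o).
  by move=> cc q; exact: continuousM (cvg_cst _) (cc q).
have DX j : continuous (fun q => Xf j u q : R^o).
  move=> q; exact (continuousD (Du _ q)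
    (continuousM (two_coord_cont _ (@hy_continuous R N j) q) (Du _ q))).
have DY j : continuous (fun q => Yf j u q : R^o).
  move=> q; exact (continuousB (Du _ q)
    (continuousM (two_coord_cont _ (@hx_continuous R N j) q) (Du _ q))).
apply: continuous_sum => j q.
exact (continuousD (continuousM (DX j q) (DX j q)) (continuousM (DY j q) (DY j q))).
Qed.

Lemma hgrad_norm_eq0_near u p : (\forall q \near p, u q = 0) -> hgrad_norm u p = 0.
Proof.
move=> u0; have D0 v : 'D_v u p = 0.
  by rewrite (near_eq_derive v (u0 : \near p, u p = cst 0 p)) derive_cst.
rewrite /hgrad_norm big1 ?sqrtr0 // => j _.
by rewrite /Xf /Yf !D0 !mulr0 addr0 subr0 expr0n /= addr0.
Qed.

Lemma hgrad_norm_bounded (phi : H -> R^o) (c : R) : Ck 1 phi -> 0 <= c ->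
  (forall p, c <= hnorm p -> phi p = 0) ->
  exists M, forall p, hgrad_norm phi p <= M.
Proof.
move=> dphi c0 phi0.
have [M hM] : exists M, forall p, `|hgrad_norm phi p| <= M.
  apply: (compact_support_bounded (@hbox_compact R N (c + c ^+ 2))).
    exact: hgrad_norm_continuous.
  move=> p pB; apply: hgrad_norm_eq0_near.
  have cp : c ^+ 4 < hnorm4 p.
    by rewrite ltNge; apply/negP => /(hbox_hnorm4_le c0).
  have gap : 0 < hnorm4 p - c ^+ 4 by rewrite subr_gt0.
  have near_gap : \forall q \near p, `|hnorm4 p - hnorm4 q| < hnorm4 p - c ^+ 4.
    exact: (cvgrPdist_lt _ _).1 (@hnorm4_continuous R N p) _ gap.
  apply: filterS near_gap => q pq; apply: phi0; rewrite le_hnorm //.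
  by move: pq; rewrite ltr_distlC => /andP[+ _]; lra.
by exists M => p; apply: le_trans (hM p); exact: ler_norm.
Qed.

End horizontal_gradient.

Section bubble.
Variables (R : realType) (N : nat) (s C0 normU S eps : R).
Hypothesis eps_gt0 : 0 < eps.
Local Notation H := (Heis R N).
Implicit Types (p v : H).

Definition bubble_dil : R := S `^ (- (2 * s)^-1).
Definition bubble_exp : R := (Qdim R N - 2 * s) / 4.
Definition bubble_coef : R := C0 / normU * eps `^ ((Qdim R N - 2 * s) / 2).
Local Notation a := bubble_dil.
Local Notation k := bubble_exp.

Definition bubble_mid p : R := eps ^+ 2 + a ^+ 2 * (sqn (hx p) + sqn (hy p)).
Definition bubble_den p : R := (a ^+ 2 * ht p) ^+ 2 + bubble_mid p ^+ 2.

Lemma bubble_mid_ge0 p : 0 <= bubble_mid p.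
Proof. by rewrite addr_ge0 ?sqr_ge0 // mulr_ge0 ?sqr_ge0 // addr_ge0 // sqn_ge0. Qed.

Lemma bubble_den_gt0 p : 0 < bubble_den p.
Proof.
rewrite ltr_wpDl ?sqr_ge0 // exprn_gt0 // ltr_wpDr ?exprn_gt0 //.
by rewrite mulr_ge0 ?sqr_ge0 // addr_ge0 // sqn_ge0.
Qed.

Lemma bubble_exp_gt0 : s < 1 -> 0 < k.
Proof.
move=> s1; rewrite divr_gt0 // subr_gt0.
have : (2 : R) <= Qdim R N.
  by rewrite /Qdim -[2 in leLHS]/(2%:R) ler_nat addnC leq_addr.
lra.
Qed.

(* Pulling eps^-4 out of the base turns eps^(-(Q-2s)/2) into eps^((Q-2s)/2). *)
Lemma UepsE p :
  Ueps s C0 normU S eps p = bubble_coef * bubble_den p `^ (- k).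
Proof.
rewrite /Ueps /ustar /ubar /Ububble /dil /hx /hy /ht /= !sqnZ -/a.
have -> : (a ^+ 2 * (eps^-1 ^+ 2 * p.2)) ^+ 2 +
    (1 + a ^+ 2 * (eps^-1 ^+ 2 * sqn p.1.1) + a ^+ 2 * (eps^-1 ^+ 2 * sqn p.1.2)) ^+ 2
    = eps `^ (-4) * bubble_den p.
  rewrite powR_invn ?ltW // /bubble_den /bubble_mid /hx /hy /ht.
  by field; exact: lt0r_neq0.
rewrite powRM ?powR_ge0 ?(ltW (bubble_den_gt0 p)) // -powRrM -/k.
rewrite (_ : forall A B C D E : R, A * (C * (B * D) / E) = C / E * (A * B) * D);
  last by move=> *; ring.
rewrite -powRD; last by apply/implyP => _; exact: lt0r_neq0.
by congr (_ * _ `^ _ * _); rewrite /k; field.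
Qed.

Definition bubble_den_line p v : {poly R} :=
  ((a ^+ 2 * ht p)%:P + (a ^+ 2 * ht v)%:P * 'X) ^+ 2 +
  ((bubble_mid p)%:P
    + (a ^+ 2 * 2 * (dotv (hx p) (hx v) + dotv (hy p) (hy v)))%:P * 'X
    + (a ^+ 2 * (sqn (hx v) + sqn (hy v)))%:P * 'X ^+ 2) ^+ 2.

Definition bubble_den_deriv p v : R :=
  2 * (a ^+ 2 * ht p) * (a ^+ 2 * ht v) +
  2 * bubble_mid p * (a ^+ 2 * 2 * (dotv (hx p) (hx v) + dotv (hy p) (hy v))).

Lemma bubble_den_lineE p v (h : R) :
  bubble_den (h *: v + p) = (bubble_den_line p v).[h].
Proof.
rewrite scale_add_coord /bubble_den_line /bubble_den /bubble_mid /hx /hy /ht /=.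
by rewrite !sqn_scale_add !hornerE /=; ring.
Qed.

Lemma bubble_den_line0 p v : (bubble_den_line p v).[0] = bubble_den p.
Proof. by rewrite -bubble_den_lineE scale0r add0r. Qed.

Lemma bubble_den_line_deriv0 p v :
  (bubble_den_line p v)^`().[0] = bubble_den_deriv p v.
Proof.
by rewrite /bubble_den_line /bubble_den_deriv !expr2 !poly.derivE !hornerE /=; ring.
Qed.

Lemma derive_Ueps p v :
  derivable (Ueps s C0 normU S eps : H -> R^o) p v /\
  'D_v (Ueps s C0 normU S eps : H -> R^o) p =
    - k * Ueps s C0 normU S eps p * bubble_den_deriv p v / bubble_den p.
Proof.
have Uline h : Ueps s C0 normU S eps (h *: v + p) =
    bubble_coef * (bubble_den_line p v).[h] `^ (- k).
  by rewrite UepsE bubble_den_lineE.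
have P0 : 0 < (bubble_den_line p v).[0] by rewrite bubble_den_line0 bubble_den_gt0.
have [dU ->] := derive_powR_horner_along_line Uline P0.
split => //; rewrite bubble_den_line0 bubble_den_line_deriv0 UepsE.
rewrite powRB ?powRr1 ?(ltW (bubble_den_gt0 p)) //; last first.
  by apply/implyP => _; exact: lt0r_neq0 (bubble_den_gt0 p).
by field; exact: lt0r_neq0 (bubble_den_gt0 p).
Qed.

Lemma Xf_Ueps j p : Xf j (Ueps s C0 normU S eps) p =
  - k * Ueps s C0 normU S eps p *
  (4 * a ^+ 2 * bubble_mid p * hx p 0 j + 4 * a ^+ 4 * hy p 0 j * ht p) /
  bubble_den p.
Proof.
rewrite /Xf !(derive_Ueps p _).2 /bubble_den_deriv /dirx /dirt /hx /hy /ht /=.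
by rewrite dotv_erow !dotv0; field; exact: lt0r_neq0 (bubble_den_gt0 p).
Qed.

Lemma Yf_Ueps j p : Yf j (Ueps s C0 normU S eps) p =
  - k * Ueps s C0 normU S eps p *
  (4 * a ^+ 2 * bubble_mid p * hy p 0 j + 4 * a ^+ 4 * (- hx p 0 j) * ht p) /
  bubble_den p.
Proof.
rewrite /Yf !(derive_Ueps p _).2 /bubble_den_deriv /diry /dirt /hx /hy /ht /=.
by rewrite dotv_erow !dotv0; field; exact: lt0r_neq0 (bubble_den_gt0 p).
Qed.

Lemma bubble_den_ge_hnorm4 p : a ^+ 4 * hnorm4 p <= bubble_den p.
Proof.
rewrite /bubble_den /bubble_mid /hnorm4.
have W0 : 0 <= sqn (hx p) + sqn (hy p) by rewrite addr_ge0 ?sqn_ge0.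
have a20 : 0 <= a ^+ 2 by exact: sqr_ge0.
have e20 : 0 <= eps ^+ 2 by exact: sqr_ge0.
have aW0 : 0 <= a ^+ 2 * (sqn (hx p) + sqn (hy p)) by exact: mulr_ge0.
have -> : a ^+ 4 * ((sqn (hx p) + sqn (hy p)) ^+ 2 + ht p ^+ 2) =
    (a ^+ 2 * ht p) ^+ 2 + (a ^+ 2 * (sqn (hx p) + sqn (hy p))) ^+ 2 by ring.
by rewrite lerD2l ler_sqr ?nnegrE ?addr_ge0 // lerDr.
Qed.

Lemma bubble_den_ge (rho : R) p : 0 <= rho -> rho <= hnorm p ->
  a ^+ 4 * rho ^+ 4 <= bubble_den p.
Proof.
move=> rho0 prho; apply: le_trans (bubble_den_ge_hnorm4 p).
by apply: ler_wpM2l; [exact: exprn_even_ge0|rewrite -le_hnorm].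
Qed.

Lemma Ueps_le (rho : R) p : 0 < C0 -> 0 < normU -> s < 1 -> 0 < S -> 0 < rho ->
  rho <= hnorm p -> `|Ueps s C0 normU S eps p| <= bubble_coef * (a ^+ 4 * rho ^+ 4) `^ (- k).
Proof.
move=> C00 nU0 s1 S0 rho0 prho.
have c0 : 0 < bubble_coef by rewrite mulr_gt0 ?powR_gt0 ?divr_gt0.
have L0 : 0 < a ^+ 4 * rho ^+ 4 by rewrite mulr_gt0 ?exprn_gt0 ?powR_gt0.
rewrite UepsE ger0_norm; last exact: mulr_ge0 (ltW c0) (powR_ge0 _ _).
rewrite (ler_pM2l c0) !powRN lef_pV2 ?posrE ?powR_gt0 ?bubble_den_gt0 //.
apply: (ge0_ler_powR (ltW (bubble_exp_gt0 s1))); rewrite ?nnegrE ?(ltW L0) //.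
  exact: ltW (bubble_den_gt0 p).
exact: bubble_den_ge (ltW rho0) prho.
Qed.

Definition grad_ueps_const (rho M Mphi : R) : R :=
  let L := a ^+ 4 * rho ^+ 4 in
  L `^ (- k) * (Mphi + k * (4 * a ^+ 2 * M * (1 + L^-1) + 4 * a ^+ 4 * M ^+ 2 / L)).

Lemma grad_ueps_const_gt0 (rho M Mphi : R) : 0 < S -> s < 1 -> 0 < rho -> 0 < M ->
  0 <= Mphi -> 0 < grad_ueps_const rho M Mphi.
Proof.
move=> S0 s1 rho0 M0 Mphi0.
have a0 : 0 < a by rewrite powR_gt0.
have L0 : 0 < a ^+ 4 * rho ^+ 4 by rewrite mulr_gt0 ?exprn_gt0.
have K1 : 0 < 4 * a ^+ 2 * M * (1 + (a ^+ 4 * rho ^+ 4)^-1).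
  by rewrite !mulr_gt0 ?exprn_gt0 // addr_gt0 // invr_gt0.
have K2 : 0 <= 4 * a ^+ 4 * M ^+ 2 / (a ^+ 4 * rho ^+ 4).
  by rewrite divr_ge0 ?mulr_ge0 ?exprn_ge0 // ltW.
rewrite mulr_gt0 ?powR_gt0 // ltr_wpDl // mulr_gt0 ?bubble_exp_gt0 //.
exact: ltr_wpDr.
Qed.

Lemma horizontal_derivatives_ueps_le (phi : H -> R^o) (rho M Mphi : R) p j :
  0 < C0 -> 0 < normU -> 0 < S -> s < 1 -> 0 < rho -> 0 <= M -> Ck 1 phi ->
  rho < hnorm p -> `|phi p| <= 1 -> (~ hbox M p -> phi p = 0) ->
  `|Xf j phi p| <= Mphi -> `|Yf j phi p| <= Mphi ->
  `|Xf j (ueps s C0 normU S eps phi) p| <= bubble_coef * grad_ueps_const rho M Mphi /\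
  `|Yf j (ueps s C0 normU S eps phi) p| <= bubble_coef * grad_ueps_const rho M Mphi.
Proof.
move=> C00 nU0 S0 s1 rho0 M0 [dphi _] prho phi1 phiM XM YM.
set U := Ueps s C0 normU S eps p; set B := bubble_den p.
have B0 : 0 < B := bubble_den_gt0 p.
set L := a ^+ 4 * rho ^+ 4.
set K := 4 * a ^+ 2 * M * (1 + L^-1) + 4 * a ^+ 4 * M ^+ 2 / L.
have kpos := bubble_exp_gt0 s1; have k0 := ltW kpos.
have a0 : 0 < a by rewrite powR_gt0.
have L0 : 0 < L by rewrite mulr_gt0 ?exprn_gt0.
have K0 : 0 <= K.
  by rewrite addr_ge0 ?mulr_ge0 ?addr_ge0 ?divr_ge0 ?invr_ge0 ?exprn_ge0 ?(ltW a0) ?(ltW L0).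
have LB : L <= B := bubble_den_ge (ltW rho0) (ltW prho).
have UL : `|U| <= bubble_coef * L `^ (- k) := Ueps_le C00 nU0 s1 S0 rho0 (ltW prho).
have leibniz_le (d xb : R) : `|d| <= Mphi -> (hbox M p -> `|xb| / B <= K) ->
    `|U * d + phi p * (- k * U * xb / B)| <= bubble_coef * grad_ueps_const rho M Mphi.
  move=> dM xbK; rewrite /grad_ueps_const -/L -/K mulrA.
  have -> : U * d + phi p * (- k * U * xb / B) = U * (d - k * (phi p * (xb / B))).
    by rewrite /B; field; exact: lt0r_neq0.
  rewrite normrM; apply: ler_pM => //; apply: le_trans (ler_normB _ _) _.
  apply: lerD => //; rewrite normrM (ger0_norm k0) (ler_pM2l kpos).
  have [/xbK pK|/phiM ->] := pselect (hbox M p); last by rewrite mul0r normr0.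
  rewrite normrM -[K]mul1r; apply: ler_pM => //.
  by rewrite normrM normfV (gtr0_norm B0).
have dU v : derivable (Ueps s C0 normU S eps : H -> R^o) p v := (derive_Ueps p v).1.
have dphi' v : derivable phi p v := diff_derivable (dphi p).
have mB : bubble_mid p ^+ 2 <= B by rewrite lerDr sqr_ge0.
have m0 := bubble_mid_ge0 p.
rewrite -[ueps _ _ _ _ _ _]/((Ueps s C0 normU S eps : H -> R^o) * phi).
rewrite XfM // YfM // Xf_Ueps Yf_Ueps.
split; apply: leibniz_le => // -[[xM yM] tM]; apply: horizontal_ratio_le => //.
by rewrite normrN.
Qed.

End bubble.

Theorem lemma3p8 (R : realType) (N : nat) (s C0 normU S : R)
  (Omega : set (Heis R N)) (r : R) (phi : Heis R N -> R) (rho : R) :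
  (0 < N)%N -> 0 < s -> s < 1 -> 0 < C0 -> 0 < normU -> 0 < S ->
  open Omega -> bounded_set Omega ->
  0 < r -> hball (4 * r) `<=` Omega ->
  smooth phi -> (forall p, 0 <= phi p <= 1) ->
  (forall p, hnorm p < r -> phi p = 1) ->
  (forall p, 2 * r <= hnorm p -> phi p = 0) ->
  0 < rho ->
  exists C : R, 0 < C /\
    forall (eps : R) (p : Heis R N), 0 < eps -> rho < hnorm p ->
      hgrad_norm (ueps s C0 normU S eps phi) p
        <= C * eps `^ ((Qdim R N - 2 * s) / 2).
Proof.
move=> N0 s0 s1 C00 nU0 S0 _ _ r0 _ sm phi01 _ phi0 rho0.
have r2 : 0 <= 2 * r by rewrite mulr_ge0 // ltW.
have [Mphi phiM] := hgrad_norm_bounded (sm 1%N) r2 phi0.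
set M := 2 * r + (2 * r) ^+ 2.
have supp_phi p : ~ hbox M p -> phi p = 0.
  move=> pM; apply: phi0; rewrite le_hnorm // leNgt; apply/negP => /ltW.
  by move/(hbox_hnorm4_le r2).
have M0 : 0 < M by rewrite ltr_pwDl ?sqr_ge0 // mulr_gt0.
have T0 : 0 < grad_ueps_const N s S rho M Mphi.
  apply: grad_ueps_const_gt0 => //; apply: le_trans (phiM 0).
  exact: sqrtr_ge0.
exists (Num.sqrt (N.*2)%:R * (C0 / normU) * grad_ueps_const N s S rho M Mphi).
split.
  apply: mulr_gt0 T0; apply: mulr_gt0; last exact: divr_gt0.
  by rewrite sqrtr_gt0 ltr0n double_gt0.
move=> eps p eps0 prho.
have phi1 : `|phi p| <= 1 by have /andP[? ?] := phi01 p; rewrite ger0_norm.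
have -> : Num.sqrt (N.*2)%:R * (C0 / normU) * grad_ueps_const N s S rho M Mphi *
    eps `^ ((Qdim R N - 2 * s) / 2) =
    Num.sqrt (N.*2)%:R * (bubble_coef N s C0 normU eps * grad_ueps_const N s S rho M Mphi).
  by rewrite /bubble_coef; ring.
apply: hgrad_norm_le.
  by rewrite mulr_ge0 ?(ltW T0) // mulr_ge0 ?powR_ge0 // divr_ge0 // ltW.
move=> j; have [XM YM] := Xf_Yf_le_hgrad_norm phi j p.
exact: (horizontal_derivatives_ueps_le eps0 C00 nU0 S0 s1 rho0 (ltW M0) (sm 1%N)
  prho phi1 (supp_phi p) (le_trans XM (phiM p)) (le_trans YM (phiM p))).
Qed.
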